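(* Let $Q$ be a Moufang loop, $(c,f)$ a left pseudoautomorphism of $Q$, and $x\in Q$. Then $\big(x^{-1}f^{-1}(c^{-1}f(x)c),\ \mu_{f,x}\big)$ is a left pseudoautomorphism of $Q$, where $\mu_{f,x}=R_x^{-1}f^{-1}R_{f(x)}f$.
   Context: A loop is Moufang if it satisfies $xy\cdot zx=(x\cdot yz)x$ for all $x,y,z$. $L_x(y)=xy$, $R_x(y)=yx$. A pair $(c,f)$ with $c\in Q$ and $f$ a permutation of $Q$ is a (left) pseudoautomorphism of $Q$ if $cf(x)\cdot f(y)=cf(xy)$ for all $x,y\in Q$; $c$ is called a companion of $f$. *)

From mathcomp Require Import ssreflect ssrfun ssrbool.
Set Implicit Arguments. Unset Strict Implicit.

(* A loop (Q, *, \, /, 1): the divisions make L_x and R_x bijections. *)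
Record loop := Loop {
  lcar :> Type;
  lmul : lcar -> lcar -> lcar;
  lldiv : lcar -> lcar -> lcar;
  lrdiv : lcar -> lcar -> lcar;
  lone : lcar;
  _ : forall x y, lmul x (lldiv x y) = y;
  _ : forall x y, lldiv x (lmul x y) = y;
  _ : forall x y, lmul (lrdiv y x) x = y;
  _ : forall x y, lrdiv (lmul y x) x = y;
  _ : forall x, lmul lone x = x;
  _ : forall x, lmul x lone = x
}.

Section Defs.
Variable Q : loop.
Local Notation "x * y" := (lmul x y).

Definition Lmap (x : Q) : Q -> Q := fun y => x * y.
Definition Rmap (x : Q) : Q -> Q := fun y => y * x.
Definition Rinv (x : Q) : Q -> Q := fun y => lrdiv y x.

(* inverse: x^{-1} with x * x^{-1} = 1 (two-sided in Moufang loops) *)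
Definition linv (x : Q) : Q := lldiv x (lone Q).

Definition moufang : Prop :=
  forall x y z : Q, (x * y) * (z * x) = (x * (y * z)) * x.

Definition left_pseudoaut (c : Q) (f : Q -> Q) : Prop :=
  bijective f /\ forall x y : Q, (c * f x) * f y = c * f (x * y).

Definition mu (f finv : Q -> Q) (x : Q) : Q -> Q :=
  Rinv x \o finv \o Rmap (f x) \o f.
End Defs.

(* The map [alpha a := x \ f^-1 (c \ (f x * (c * f a)))] satisfies
   [alpha a * mu b = alpha (a * b)]: conjugating both sides by [x] with the
   Moufang law reduces this to the Moufang law in the image of [f], via the
   pseudoautomorphism identity.  Taking [a = 1] gives [alpha b = alpha 1 * mu b],
   and [alpha 1] is the announced companion by the left inverse property. *)
From mathcomp Require Import ssreflect ssrfun ssrbool.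

Set Implicit Arguments.

Section LoopLaws.
Variable Q : loop.
Local Notation "x * y" := (lmul x y).
Implicit Types x y z : Q.

Lemma lmul_lldiv x y : x * lldiv x y = y. Proof. by case: Q x y. Qed.
Lemma lldiv_lmul x y : lldiv x (x * y) = y. Proof. by case: Q x y. Qed.
Lemma lmul_lrdiv x y : lrdiv y x * x = y. Proof. by case: Q x y. Qed.
Lemma lrdiv_lmul x y : lrdiv (y * x) x = y. Proof. by case: Q x y. Qed.
Lemma lmul1 x : lone Q * x = x. Proof. by case: Q x. Qed.
Lemma lmulr1 x : x * lone Q = x. Proof. by case: Q x. Qed.

Lemma lmulI x : injective (lmul x).
Proof. by move=> y z yz; rewrite -(lldiv_lmul x y) yz lldiv_lmul. Qed.

Lemma lmulIr x : injective (fun y => y * x).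
Proof. by move=> y z yz; rewrite -(lrdiv_lmul x y) /= yz lrdiv_lmul. Qed.

End LoopLaws.

Arguments lmulI {Q} x [x1 x2].
Arguments lmulIr {Q} x [x1 x2].

Section MoufangLaws.
Variable Q : loop.
Hypothesis moufQ : moufang Q.
Local Notation "x * y" := (lmul x y).
Implicit Types x y : Q.

Lemma moufang_flexible x y : x * (y * x) = (x * y) * x.
Proof. by have := moufQ x (lone Q) y; rewrite lmulr1 lmul1. Qed.

Lemma moufang_lldiv x y : lldiv x y = linv x * y.
Proof.
apply: (lmulI x); rewrite lmul_lldiv; apply: (lmulIr x) => /=.
by rewrite -moufQ /linv lmul_lldiv lmul1.
Qed.

End MoufangLaws.

Section PseudoautomorphismMu.
Variables (Q : loop) (c : Q) (f finv : Q -> Q) (x : Q).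
Hypothesis moufQ : moufang Q.
Hypotheses (fK : cancel f finv) (finvK : cancel finv f).
Hypothesis f_pseudo : forall a b : Q, lmul (lmul c (f a)) (f b) = lmul c (f (lmul a b)).
Local Notation "a * b" := (lmul a b).
Local Notation mu := (mu f finv x).
Implicit Types a b z : Q.

Lemma pseudoaut1 : f (lone Q) = lone Q.
Proof.
apply: (lmulI c); rewrite lmulr1.
have := f_pseudo (lone Q) (finv (lone Q)).
by rewrite finvK lmulr1 lmul1 finvK lmulr1.
Qed.

Lemma mul_mu_r b : mu b * x = finv (f b * f x).
Proof. exact: lmul_lrdiv. Qed.

Lemma finv_ldiv_mulr z : finv (lldiv c z) * x = finv (lldiv c (z * f x)).
Proof.
apply: (can_inj fK); apply: (lmulI c).
by rewrite -f_pseudo !finvK !lmul_lldiv.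
Qed.

Definition alpha a := lldiv x (finv (lldiv c (f x * (c * f a)))).

Lemma alpha_mul_mu a b : alpha a * mu b = alpha (a * b).
Proof.
apply: (lmulI x); apply: (lmulIr x) => /=.
rewrite -moufQ lmul_lldiv mul_mu_r lmul_lldiv finv_ldiv_mulr.
apply: (can_inj fK); apply: (lmulI c).
by rewrite -f_pseudo !finvK !lmul_lldiv moufQ f_pseudo.
Qed.

Lemma alpha1 : alpha (lone Q) = linv x * finv ((linv c * f x) * c).
Proof.
rewrite /alpha pseudoaut1 lmulr1 (moufang_lldiv moufQ); congr (_ * finv _).
apply: (lmulI c); rewrite lmul_lldiv moufang_flexible //.
by rewrite -(moufang_lldiv moufQ) lmul_lldiv.
Qed.

Lemma alpha_mu b : alpha b = alpha (lone Q) * mu b.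
Proof. by rewrite alpha_mul_mu lmul1. Qed.

Lemma mu_bij : bijective mu.
Proof.
exists (fun a => finv (lrdiv (f (a * x)) (f x))) => a;
  rewrite /mu /Rinv /Rmap /=.
  by rewrite lmul_lrdiv finvK lrdiv_lmul fK.
by rewrite finvK lmul_lrdiv fK lrdiv_lmul.
Qed.

End PseudoautomorphismMu.

Theorem mainTheorem11 (Q : loop) (c : Q) (f finv : Q -> Q) (x : Q) :
  moufang Q ->
  cancel f finv -> cancel finv f ->
  left_pseudoaut c f ->
  left_pseudoaut
    (lmul (linv x) (finv (lmul (lmul (linv c) (f x)) c)))
    (mu f finv x).
Proof.
move=> moufQ fK finvK [_ f_pseudo]; split; first exact: mu_bij.
move=> a b; rewrite -(alpha1 c x moufQ finvK f_pseudo).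
rewrite -!(alpha_mu c x moufQ fK finvK f_pseudo).
exact: alpha_mul_mu.
Qed.
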